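(* Let $F$ be a bipartite graph on vertices $v_1,\dots,v_m$, let $\mathcal{H}$ be a nonempty class of graphs, and let $H$ be an $\mathcal{H}$-blow-up of $F$. Then $H\times K_2\cong H^{V(F)}$.
   Context: The tensor product $H'\times K_2$ has vertex set $V(H')\times\{1,2\}$, with $(x,i)\sim(y,j)$ iff $xy\in E(H')$ and $i\ne j$. The $\mathcal{H}$-blow-up $H$ of $F$ is the disjoint union of $H_1,\dots,H_m\in\mathcal{H}$ (on vertex sets $V_1,\dots,V_m$, $H_i$ replacing $v_i$) with all edges between $V_i$ and $V_j$ added whenever $v_iv_j\in E(F)$. For $U\subseteq V(F)$, the graph $H^{U}$ is defined as follows: take two vertex-disjoint copies of $H$, on $\bigsqcup_i W_i$ and $\bigsqcup_i W_i'$, where $W_i,W_i'$ are copies of $V_i$; then for each $j$ with $v_j\in U$, delete all edges inside $W_j$ and inside $W_j'$ and instead join the copy $w\in W_j$ of $x\in V_j$ to the copy $w'\in W_j'$ of $y\in V_j$ whenever $xy\in E(H_j)$ (so the graph on $W_j\sqcup W_j'$ becomes $H_j\times K_2$). All other edges are as in the two copies of $H$. *)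

From mathcomp Require Import all_boot.
Set Implicit Arguments. Unset Strict Implicit. Unset Printing Implicit Defensive.

Definition simple_graph (T : finType) (e : rel T) : Prop :=
  symmetric e /\ irreflexive e.

Definition bipartite (T : finType) (e : rel T) : Prop :=
  exists c : T -> bool, forall x y, e x y -> c x != c y.

Definition graph_iso (T1 T2 : finType) (e1 : rel T1) (e2 : rel T2) : Prop :=
  exists f : T1 -> T2, bijective f /\ forall x y, e2 (f x) (f y) = e1 x y.

Definition tensorK2 (T : finType) (e : rel T) : rel (T * bool) :=
  fun p q => e p.1 q.1 && (p.2 != q.2).

Definition bvert (m : nat) (V : 'I_m -> finType) : finType := {i : 'I_m & V i}.

Definition blowup (m : nat) (F : rel 'I_m) (V : 'I_m -> finType)
  (E : forall i, rel (V i)) : rel (bvert V) :=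
  fun u w => F (tag u) (tag w) ||
             ((tag w == tag u) && E (tag u) (tagged u) (tagged_as u w)).

(* H^U : two copies (false = W, true = W') of the blow-up; for i in U the
   edges inside W_i and W'_i are replaced by those of H_i x K_2. *)
Definition blowupU (m : nat) (F : rel 'I_m) (V : 'I_m -> finType)
  (E : forall i, rel (V i)) (U : {set 'I_m}) : rel (bvert V * bool) :=
  fun p q =>
    (F (tag p.1) (tag q.1) && (p.2 == q.2)) ||
    [&& tag q.1 == tag p.1, E (tag p.1) (tagged p.1) (tagged_as p.1 q.1) &
        (if tag p.1 \in U then p.2 != q.2 else p.2 == q.2)].

From mathcomp Require Import all_boot.
Set Implicit Arguments. Unset Strict Implicit. Unset Printing Implicit Defensive.

(* Fix a proper 2-colouring c of F and send the copy (x, a) of a vertex x of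
   the blow-up, lying in part V_i, to (x, a (+) c i).  An edge of H between
   two parts joins parts of different colours, so the twist turns the
   condition "different copies" of H x K_2 into "same copy", as in H^U;
   inside a part both ends are twisted alike, so the copy-flip of H_i x K_2
   is preserved. *)

Lemma addb_eq_neq (a b c1 c2 : bool) :
  c1 != c2 -> (a (+) c1 == b (+) c2) = (a != b).
Proof. by case: a b c1 c2 => [] [] [] []. Qed.

Lemma addb_neq2r (a b c : bool) : (a (+) c != b (+) c) = (a != b).
Proof. by case: a b c => [] [] []. Qed.

Section Twist.

Variables (m : nat) (F : rel 'I_m) (V : 'I_m -> finType).
Variables (E : forall i, rel (V i)) (c : 'I_m -> bool).
Hypothesis c_proper : forall i j, F i j -> c i != c j.

Definition twist (p : bvert V * bool) : bvert V * bool :=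
  (p.1, p.2 (+) c (tag p.1)).

Lemma twistK : involutive twist.
Proof. by case=> x a; rewrite /twist /= addbK. Qed.

Lemma twist_edge (p q : bvert V * bool) :
  blowupU F E [set: 'I_m] (twist p) (twist q) = tensorK2 (blowup F E) p q.
Proof.
case: p q => [x a] [y b]; rewrite /twist /tensorK2 /blowup /blowupU /= in_setT.
case Fxy: (F (tag x) (tag y)) => /=.
  have cxy := c_proper Fxy.
  have -> : (tag y == tag x) = false.
    by apply/negbTE; apply: contraNneq cxy => ->.
  by rewrite orbF addb_eq_neq.
case: eqP => [exy | _] //=.
by rewrite exy addb_neq2r andbC.
Qed.

End Twist.

Theorem lemma5p3 (m : nat) (F : rel 'I_m) (V : 'I_m -> finType)
  (E : forall i, rel (V i)) :
  simple_graph F -> bipartite F ->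
  (forall i, simple_graph (E i)) ->
  graph_iso (tensorK2 (blowup F E)) (blowupU F E [set: 'I_m]).
Proof.
move=> _ [c c_proper] _.
exists (twist c); split; first exact: (Bijective (twistK c) (twistK c)).
exact: twist_edge.
Qed.
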